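(* Let $d\ge3$ and $2\le k\le d-1$. If the characteristic of $\mathbb F_q$ is sufficiently large (in terms of $d$), then the algebraic set $$\overline{\mathcal H}_k=\{x\in\overline{\mathbb F}_q^{\,d}:\ x_1^{j+1}+\cdots+x_k^{j+1}-x_{k+j}^{j+1}=0,\ j=1,\dots,d-k\}$$ is smooth at every point other than the origin if and only if $d-k\in\{1,2,3\}$. More precisely: if $d-k\ge4$ there exists $x\in\overline{\mathcal H}_k\setminus\{0\}$ at which the $(d-k)\times d$ Jacobian matrix $\big[\partial h_j/\partial x_i(x)\big]$ of $h_j(x)=x_1^{j+1}+\cdots+x_k^{j+1}-x_{k+j}^{j+1}$ has rank $<d-k$, while if $d-k\in\{1,2,3\}$ this Jacobian matrix has rank exactly $d-k$ at every $x\in\overline{\mathcal H}_k\setminus\{0\}$.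
   Context: $\overline{\mathbb F}_q$ denotes the algebraic closure of the finite field $\mathbb F_q$. $\overline{\mathcal H}_k$ is absolutely irreducible of dimension $k$, and smoothness at a point is understood via the Jacobian criterion (the Jacobian of the defining equations has rank equal to $d-\dim\overline{\mathcal H}_k=d-k$). *)

From HB Require Import structures.
From mathcomp Require Import all_boot all_order all_algebra.
Set Implicit Arguments. Unset Strict Implicit. Unset Printing Implicit Defensive.
Import Order.TTheory GRing.Theory Num.Theory.
Local Open Scope ring_scope.

(* h_j(y) = y_1^{j+1} + ... + y_k^{j+1} - y_{k+j}^{j+1}, for j = j0 + 1,
   j0 = 0 .. d-k-1; coordinates are 0-based: x_i (1-based) is y (i-1). *)
Definition hfun (R : comNzRingType) (d k j0 : nat) (y : 'I_d -> R) : R :=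
  \sum_(i < d | (i < k)%N) y i ^+ j0.+2
  - \sum_(i < d | i == (k + j0)%N :> nat) y i ^+ j0.+2.

Definition freeAt (F : fieldType) (d : nat) (x : 'rV[F]_d) (i : 'I_d)
  : 'I_d -> {poly F} :=
  fun l => if l == i then 'X else (x ord0 l)%:P.

Definition partial_h (F : fieldType) (d k j0 : nat) (x : 'rV[F]_d) (i : 'I_d) : F :=
  (hfun k j0 (freeAt x i))^`().[x ord0 i].

Definition jacH (F : fieldType) (d k : nat) (x : 'rV[F]_d) : 'M[F]_(d - k, d) :=
  \matrix_(j < d - k, i < d) partial_h k j x i.

Definition inH (F : fieldType) (d k : nat) (x : 'rV[F]_d) : Prop :=
  forall j0 : 'I_(d - k), hfun k j0 (fun i => x ord0 i) = 0.

(* F is an algebraic closure of F_p: algebraically closed, of characteristic p,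
   and algebraic over F_p (every element lies in some finite field F_{p^n}). *)
Definition is_alg_closure_Fp (p : nat) (F : closedFieldType) : Prop :=
  p \in [pchar F] /\ forall x : F, exists2 n : nat, (0 < n)%N & x ^+ (p ^ n) = x.

From HB Require Import structures.
From mathcomp Require Import all_boot all_order all_algebra.
From mathcomp Require Import ring zify.
Import GRing.Theory.
Local Open Scope ring_scope.

Set Implicit Arguments. Unset Strict Implicit.

(* A nonzero left-kernel
   vector u of the Jacobian at a point x of H_k yields two kinds of relations:
   - a tail column k+j with u_j <> 0 forces x_(k+j) = 0, so equation j of H_k
     says that the power sum p_(j+2) of the head coordinates x_0..x_(k-1) vanishes;
   - a head column i < k gives x_i q(x_i) = 0 with q(z) = sum_t (t+2) u_t z^t.
   When d-k <= 3, q has degree <= 2: the nonzero head coordinates take at most two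
   values, and since all multiplicities are nonzero in F (they are < p), the power
   sums p_(t+2) attached to the nonzero coefficients of q cannot all vanish
   (section PowerSums).  If all head coordinates vanish then so does x.
   When d-k >= 4, the point (1, -1, 0, ..., 0, r_0, r_1, ...) with
   r_j^(j+2) = 1 + (-1)^(j+2) lies on H_k, and 3 e_3 - 5 e_1 is a left-kernel vector
   of its Jacobian since x^4 = x^2 on the head and r_1 = r_3 = 0 (section
   SingularPoint). *)

Lemma natr_neq0_lt_pchar (R : nzRingType) (p n : nat) :
  p \in [pchar R] -> (0 < n)%N -> (n < p)%N -> n%:R != 0 :> R.
Proof.
move=> pcharRp n_gt0 n_lt_p; rewrite -(dvdn_pcharf pcharRp).
by apply: contraTN n_lt_p => /(dvdn_leq n_gt0); rewrite -leqNgt.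
Qed.

Lemma quadratic_two_roots (F : fieldType) (c0 c1 c2 a b : F) :
  a != b -> c0 + c1 * a + c2 * a ^+ 2 = 0 -> c0 + c1 * b + c2 * b ^+ 2 = 0 ->
  c1 = - c2 * (a + b) /\ c0 = c2 * (a * b).
Proof.
move=> neq_ab qa qb.
have diff : (b - a) * (c1 + c2 * (a + b)) =
    (c0 + c1 * b + c2 * b ^+ 2) - (c0 + c1 * a + c2 * a ^+ 2) by ring.
rewrite qa qb subrr in diff.
have ec1 : c1 = - c2 * (a + b).
  move/eqP: diff; rewrite mulf_eq0 subr_eq0 eq_sym (negbTE neq_ab) addr_eq0.
  by move=> /eqP ->; rewrite mulNr.
split=> //; have -> : c0 = (c0 + c1 * a + c2 * a ^+ 2) - c1 * a - c2 * a ^+ 2 by ring.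
by rewrite qa ec1; ring.
Qed.

Section PowerSums.

Variables (F : fieldType) (p : nat) (I : finType) (P : pred I) (y : I -> F).
Hypotheses (pcharFp : p \in [pchar F]) (card_lt_p : (#|I| < p)%N).

Local Notation psum e := (\sum_(i | P i) y i ^+ e).

Definition valmult (a : F) : nat := #|[set i | P i & y i == a]|.

Lemma valmult_gt0 i : P i -> (0 < valmult (y i))%N.
Proof. by move=> Pi; apply/card_gt0P; exists i; rewrite inE Pi eqxx. Qed.

Lemma valmult_add_le (a b : F) : a != b -> (valmult a + valmult b <= #|I|)%N.
Proof.
move=> neq_ab; rewrite /valmult -cardsUI.
have -> : [set i | P i & y i == a] :&: [set i | P i & y i == b] = set0.
  apply/setP => i; rewrite !inE.
  by case: (eqVneq (y i) a) => [->|]; rewrite ?(negbTE neq_ab) ?andbF.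
by rewrite cards0 addn0 max_card.
Qed.

Lemma valmult_natr_neq0 (a b : F) : a != b -> (0 < valmult a)%N ->
  (valmult a)%:R != 0 :> F.
Proof.
move=> neq_ab pos; apply: natr_neq0_lt_pchar pcharFp pos _.
by apply: leq_ltn_trans card_lt_p; apply: leq_trans (valmult_add_le neq_ab); exact: leq_addr.
Qed.

Lemma psum_values (a b : F) (e : nat) : a != b ->
  (forall i, P i -> [|| y i == 0, y i == a | y i == b]) -> (0 < e)%N ->
  psum e = a ^+ e *+ valmult a + b ^+ e *+ valmult b.
Proof.
move=> neq_ab yP e_gt0.
rewrite (bigID (fun i => y i == a)) /= [X in _ + X](bigID (fun i => y i == b)) /=.
rewrite [X in _ + (_ + X)]big1 ?addr0; last first.
  move=> i /andP[/andP[Pi /negbTE ya] /negbTE yb].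
  by move: (yP i Pi); rewrite ya yb !orbF => /eqP ->; rewrite expr0n gtn_eqF.
rewrite /valmult -!sumr_const.
congr (_ + _); apply: eq_big => [i|i /andP[_ /eqP ->]] //; rewrite inE //.
by case: (P i) => //=; case: (eqVneq (y i) a) => [->|]; rewrite ?(negbTE neq_ab).
Qed.

Lemma psum_one_value_neq0 (a : F) (e : nat) : a != 0 -> (exists2 i, P i & y i = a) ->
  (forall i, P i -> y i != 0 -> y i = a) -> (0 < e)%N -> psum e != 0.
Proof.
move=> a_neq0 [i0 Pi0 yi0] yP e_gt0.
rewrite (@psum_values a 0) //; last first.
  by move=> i Pi; case: (eqVneq (y i) 0) => //= yi; rewrite (yP i Pi yi) eqxx.
rewrite expr0n gtn_eqF // mul0rn addr0 -mulr_natr mulf_neq0 ?expf_neq0 //.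
by apply: (valmult_natr_neq0 a_neq0); rewrite -yi0 valmult_gt0.
Qed.

(* With values in {0, a, b}, a <> b and a <> 0 occurring, p_2 and p_4 cannot both
   vanish: they would force a^2 = b^2 and then (m_a + m_b) a^2 = 0. *)
Lemma psum24_two_values (a b : F) : a != b -> a != 0 -> (exists2 i, P i & y i = a) ->
  (forall i, P i -> [|| y i == 0, y i == a | y i == b]) ->
  psum 2 = 0 -> psum 4 = 0 -> False.
Proof.
move=> neq_ab a_neq0 [i0 Pi0 yi0] yP.
rewrite (psum_values (e:=2) neq_ab yP isT) (psum_values (e:=4) neq_ab yP isT).
rewrite -!(mulr_natr (_ ^+ _)).
have na_gt0 : (0 < valmult a)%N by rewrite -yi0 valmult_gt0.
have na_neq0 := valmult_natr_neq0 neq_ab na_gt0.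
have total_neq0 : (valmult a)%:R + (valmult b)%:R != 0 :> F.
  rewrite -natrD; apply: natr_neq0_lt_pchar pcharFp _ _; first by rewrite addn_gt0 na_gt0.
  exact: leq_ltn_trans (valmult_add_le neq_ab) card_lt_p.
move: (valmult a)%:R (valmult b)%:R na_neq0 total_neq0 => na nb na_neq0 total_neq0 s2 s4.
have a2_neq0 : a ^+ 2 != 0 by rewrite expf_neq0.
have a2b2 : a ^+ 2 = b ^+ 2.
  apply/eqP; rewrite -subr_eq0; apply/eqP/(mulfI (mulf_neq0 na_neq0 a2_neq0)).
  have -> : (na * a ^+ 2) * (a ^+ 2 - b ^+ 2) =
      (a ^+ 4 * na + b ^+ 4 * nb) - b ^+ 2 * (a ^+ 2 * na + b ^+ 2 * nb) by ring.
  by rewrite s2 s4 !mulr0 subr0.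
have := mulf_neq0 a2_neq0 total_neq0.
by rewrite mulrDr {2}a2b2 s2 eqxx.
Qed.

(* Two distinct roots force c_2 <> 0 and c_0 = c_2 a b <> 0 (so p_2 = p_4 = 0);
   a single root contradicts psum_one_value_neq0. *)
Lemma no_quadratic_relation (c : nat -> F) :
  (exists2 i, P i & y i != 0) ->
  (forall i, P i -> y i != 0 -> c 0%N + c 1%N * y i + c 2%N * y i ^+ 2 = 0) ->
  (forall t, (t < 3)%N -> c t != 0 -> psum t.+2 = 0) ->
  (exists2 t, (t < 3)%N & c t != 0) -> False.
Proof.
move=> [i0 Pi0 a_neq0] root_q psum0 [t t_lt3 ct_neq0].
set a := y i0 in a_neq0; have qa := root_q i0 Pi0 a_neq0.
have [/existsP[i1 /and3P[Pi1 b_neq0 neq_ba]] | /existsPn one_value] :=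
  boolP [exists i, [&& P i, y i != 0 & y i != a]].
- set b := y i1 in b_neq0 neq_ba.
  have [ec1 ec0] := quadratic_two_roots neq_ba (root_q i1 Pi1 b_neq0) qa.
  have c2_neq0 : c 2%N != 0.
    apply: contraNneq ct_neq0 => c2_eq0; move: t_lt3.
    by case: t => [|[|[|]]] // _; rewrite ?ec0 ?ec1 c2_eq0 ?oppr0 ?mul0r.
  have c0_neq0 : c 0%N != 0 by rewrite ec0 !mulf_neq0.
  have values i : P i -> [|| y i == 0, y i == a | y i == b].
    move=> Pi; case: (eqVneq (y i) 0) => //= yi_neq0.
    move/eqP: (root_q i Pi yi_neq0).
    have -> : c 0%N + c 1%N * y i + c 2%N * y i ^+ 2 = c 2%N * ((y i - b) * (y i - a)).
      by rewrite ec0 ec1; ring.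
    by rewrite !mulf_eq0 (negbTE c2_neq0) /= !subr_eq0 orbC.
  have neq_ab : a != b by rewrite eq_sym.
  exact: (psum24_two_values neq_ab a_neq0 (ex_intro2 _ _ i0 Pi0 erefl) values
    (psum0 0%N isT c0_neq0) (psum0 2%N isT c2_neq0)).
- have all_a i : P i -> y i != 0 -> y i = a.
    by move=> Pi yi_neq0; move: (one_value i); rewrite Pi yi_neq0 /= negbK => /eqP.
  have psum_neq0 e : (0 < e)%N -> psum e != 0.
    exact: psum_one_value_neq0 a_neq0 (ex_intro2 _ _ i0 Pi0 erefl) all_a.
  have [c1_eq0|c1_neq0] := eqVneq (c 1%N) 0; last first.
    by have := psum_neq0 3%N isT; rewrite psum0 ?eqxx.
  have [c2_eq0|c2_neq0] := eqVneq (c 2%N) 0; last first.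
    by have := psum_neq0 4%N isT; rewrite psum0 ?eqxx.
  move: qa; rewrite c1_eq0 c2_eq0 !mul0r !addr0 => c0_eq0.
  by move: ct_neq0 t_lt3; case: t => [|[|[|]]] //; rewrite ?c0_eq0 ?c1_eq0 ?c2_eq0 eqxx.
Qed.

End PowerSums.

Lemma sum_indicator (R : nzRingType) (I : finType) (P : pred I) (i : I) :
  \sum_(l | P l) ((l == i)%:R : R) = (P i)%:R.
Proof.
rewrite big_mkcond (bigD1 i) //= eqxx big1 ?addr0; first by case: (P i).
by move=> l /negbTE ->; case: (P l).
Qed.

Lemma rank_ltP (F : fieldType) (m n : nat) (A : 'M[F]_(m, n)) :
  reflect (exists2 u : 'rV_m, u != 0 & u *m A = 0) (\rank A < m)%N.
Proof.
rewrite ltn_neqAle rank_leq_row andbT -[\rank A == m]/(row_free A) -kermx_eq0.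
apply: (iffP rowV0Pn) => [[u /sub_kermxP uA u_neq0] | [u u_neq0 /sub_kermxP uK]].
- by exists u.
- by exists u.
Qed.

Section Jacobian.

Variables (F : fieldType) (d k : nat).

Lemma partial_hE (j0 : nat) (x : 'rV[F]_d) (i : 'I_d) :
  partial_h k j0 x i =
  x ord0 i ^+ j0.+1 *+ j0.+2 * ((i < k)%N%:R - (i == (k + j0)%N :> nat)%:R).
Proof.
have dcoord l : ((freeAt x i l ^+ j0.+2)^`()).[x ord0 i] =
    (l == i)%:R * (x ord0 i ^+ j0.+1 *+ j0.+2).
  rewrite /freeAt; case: eqP => _.
    by rewrite derivXn hornerMn hornerXn mul1r.
  by rewrite -rmorphXn derivC horner0 mul0r.
rewrite /partial_h /hfun derivB hornerD hornerN !raddf_sum /= !horner_sum.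
under eq_bigr do rewrite dcoord.
under [X in _ - X]eq_bigr do rewrite dcoord.
by rewrite -!big_distrl /= !sum_indicator; ring.
Qed.

Lemma jacHE (x : 'rV[F]_d) (j : 'I_(d - k)) (i : 'I_d) :
  jacH k x j i = j.+2%:R * x ord0 i ^+ j.+1 * ((i < k)%N%:R - (i == (k + j)%N :> nat)%:R).
Proof. by rewrite mxE partial_hE mulr_natl. Qed.

Lemma hfunE (j0 : nat) (o : 'I_d) (y : 'I_d -> F) : o = (k + j0)%N :> nat ->
  hfun k j0 y = \sum_(i < d | (i < k)%N) y i ^+ j0.+2 - y o ^+ j0.+2.
Proof.
by move=> o_eq; rewrite /hfun -o_eq [X in _ - X](big_pred1 o).
Qed.

Lemma inH_eq0 (x : 'rV[F]_d) : inH k x ->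
  (forall i : 'I_d, (i < k)%N -> x ord0 i = 0) -> x = 0.
Proof.
move=> xH x_low; apply/rowP => i; rewrite mxE.
have [/x_low //|k_le_i] := ltnP i k.
have j_lt : (i - k < d - k)%N by apply: ltn_sub2r (ltn_ord i); apply: leq_ltn_trans k_le_i _.
have := xH (Ordinal j_lt); rewrite (hfunE (o := i)) /= ?subnKC //.
rewrite big1 => [|l /x_low ->]; last by rewrite expr0n.
by rewrite sub0r => /eqP; rewrite oppr_eq0 expf_eq0 /= => /eqP.
Qed.

End Jacobian.

Lemma sum_ord_lt (R : nmodType) (d k : nat) (f : nat -> R) : (k <= d)%N ->
  \sum_(i < d | (i < k)%N) f i = \sum_(0 <= i < k) f i.
Proof.
by move=> k_le_d; rewrite -(big_mkord (fun i => (i < k)%N)) (big_nat_widen 0 k d xpredT).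
Qed.

Section SingularPoint.

Variables (F : fieldType) (d k : nat) (r : nat -> F).
Hypotheses (r_root : forall j, r j ^+ j.+2 = 1 + (-1) ^+ j.+2) (k_ge2 : (2 <= k)%N).

(* For odd j the right-hand side is 0, so r_j = 0. *)
Lemma r_odd j : odd j -> r j = 0.
Proof.
move=> odd_j; have := r_root j; rewrite -signr_odd /= odd_j expr1 subrr.
by move/eqP; rewrite expf_eq0 => /andP[_ /eqP].
Qed.

Definition witness_coord (i : nat) : F :=
  if i == 0%N then 1 else if i == 1%N then -1 else if (i < k)%N then 0 else r (i - k).

Definition witness : 'rV[F]_d := \row_(i < d) witness_coord i.

Lemma witness_coord_high i : (k <= i)%N -> witness_coord i = r (i - k).
Proof. by move=> k_le_i; rewrite /witness_coord !ifF //; lia. Qed.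

Lemma witness_coord_mid i : (2 <= i)%N -> (i < k)%N -> witness_coord i = 0.
Proof. by move=> i_ge2 i_lt_k; rewrite /witness_coord i_lt_k !ifF //; lia. Qed.

(* Head coordinates lie in {1, -1, 0}, so x^4 = x^2 there. *)
Lemma witness_coord_low i : (i < k)%N -> witness_coord i ^+ 4 = witness_coord i ^+ 2.
Proof.
move=> i_lt_k; rewrite /witness_coord i_lt_k.
by case: ifP => _; [rewrite !expr1n | case: ifP => _; [ring | rewrite !expr0n]].
Qed.

(* Equation j: 1 + (-1)^(j+2) = r_j^(j+2). *)
Lemma witness_inH : (k <= d)%N -> inH k witness.
Proof.
move=> k_le_d j0; have o_lt : (k + j0 < d)%N by have := ltn_ord j0; lia.
rewrite (hfunE (o := Ordinal o_lt)) //=.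
under eq_bigr do rewrite mxE.
rewrite mxE (sum_ord_lt (fun i => witness_coord i ^+ j0.+2)) //.
rewrite big_ltn; last by lia.
rewrite big_ltn; last by lia.
rewrite big_nat_cond big1 ?addr0; last first.
  by move=> i /andP[/andP[i_ge2 i_lt_k] _]; rewrite witness_coord_mid // expr0n.
rewrite [witness_coord (Ordinal _)]witness_coord_high /= ?leq_addr // addKn.
by rewrite r_root /witness_coord /= expr1n subrr.
Qed.

Lemma witness_neq0 : (0 < d)%N -> witness != 0.
Proof.
move=> d_gt0; apply/eqP => /rowP /(_ (Ordinal d_gt0)) /eqP.
by rewrite !mxE oner_eq0.
Qed.

(* 3 e_3 - 5 e_1 (rows of exponents 5 and 3) is a left-kernel vector: on the head
   it gives 15 (x^4 - x^2) = 0, and the tail columns k+1, k+3 vanish as r_1 = r_3 = 0. *)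
Lemma witness_singular : 3%:R != 0 :> F -> (4 <= d - k)%N ->
  (\rank (jacH k witness) < d - k)%N.
Proof.
move=> three_neq0 dk_ge4; apply/rank_ltP.
have j1 : (1 < d - k)%N by lia.
have j3 : (3 < d - k)%N by [].
exists (3%:R *: delta_mx 0 (Ordinal j3) - 5%:R *: delta_mx 0 (Ordinal j1)).
  apply/eqP => /rowP /(_ (Ordinal j3)) /eqP; rewrite !mxE /=.
  by rewrite mulr1 mulr0 subr0 (negbTE three_neq0).
rewrite mulmxBl -!scalemxAl -!rowE; apply/rowP => i; rewrite !mxE !partial_hE /= mxE.
have [i_lt_k | k_le_i] := ltnP i k.
  have -> : (i == (k + 3)%N :> nat) = false by lia.
  have -> : (i == (k + 1)%N :> nat) = false by lia.
  by rewrite witness_coord_low //; ring.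
rewrite witness_coord_high //=.
have [i_eq1 | i_neq1] := eqVneq (i : nat) (k + 1)%N.
  have -> : (i - k = 1)%N by lia.
  by rewrite r_odd // expr0n /=; ring.
have [i_eq3 | i_neq3] := eqVneq (i : nat) (k + 3)%N.
  have -> : (i - k = 3)%N by lia.
  by rewrite r_odd // expr0n /=; ring.
by rewrite /= subr0 !mulr0 subrr.
Qed.

End SingularPoint.

Lemma closed_roots (F : closedFieldType) (e : nat -> nat) (c : nat -> F) :
  (forall j, 0 < e j)%N -> exists r : nat -> F, forall j, r j ^+ e j = c j.
Proof.
move=> e_gt0.
have root_ex j : exists z : F, z ^+ e j == c j.
  have /closed_rootP[z /rootP] : size ('X^(e j) - (c j)%:P) != 1.
    by rewrite size_XnsubC ?e_gt0 // eqSS -lt0n e_gt0.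
  by rewrite !hornerE => /eqP; rewrite subr_eq0 => z_root; exists z.
by exists (fun j => xchoose (root_ex j)) => j; apply/eqP/(xchooseP (root_ex j)).
Qed.

Lemma sum_regroup (R : nmodType) (m n : nat) (f : 'I_m -> nat -> R) : (m <= n)%N ->
  \sum_(j < m) f j j = \sum_(t < n) \sum_(j < m | j == t :> nat) f j t.
Proof.
move=> m_le_n; under [RHS]eq_bigr do rewrite big_mkcond.
rewrite exchange_big /=; apply: eq_bigr => j _.
have j_lt_n : (j < n)%N by apply: leq_trans m_le_n.
rewrite (bigD1 (Ordinal j_lt_n)) //= eqxx big1 ?addr0 // => t.
by rewrite -val_eqE /= eq_sym => /negbTE ->.
Qed.

Section RegularPoints.

Variables (F : fieldType) (p d k : nat).
Hypotheses (pcharFp : p \in [pchar F]) (d_lt_p : (d < p)%N) (k_gt0 : (0 < k)%N).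
Variables (x : 'rV[F]_d) (u : 'rV[F]_(d - k)).
Hypotheses (xH : inH k x) (uJ : u *m jacH k x = 0).

Local Notation psum e := (\sum_(i < d | (i < k)%N) x ord0 i ^+ e).

Lemma kernel_column (i : 'I_d) : \sum_(j < d - k) u ord0 j * jacH k x j i = 0.
Proof. by have /rowP /(_ i) := uJ; rewrite !mxE. Qed.

Lemma exponent_neq0 (j : 'I_(d - k)) : j.+2%:R != 0 :> F.
Proof. by apply: natr_neq0_lt_pchar pcharFp _ _ => //; have := ltn_ord j; lia. Qed.

(* Tail column k+j: u_j <> 0 forces x_(k+j) = 0, hence p_(j+2) = 0. *)
Lemma kernel_psum (j : 'I_(d - k)) : u ord0 j != 0 -> psum j.+2 = 0.
Proof.
move=> uj_neq0; have o_lt : (k + j < d)%N by have := ltn_ord j; lia.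
have := kernel_column (Ordinal o_lt).
rewrite (bigD1 j) //= big1 ?addr0 => [|l l_neq_j]; last first.
  rewrite jacHE /=.
  have -> : (k + j == k + l)%N = false by rewrite eqn_add2l eq_sym; exact: negbTE l_neq_j.
  by rewrite ltnNge leq_addr subrr !mulr0.
rewrite jacHE /= ltnNge leq_addr eqxx.
move/eqP; rewrite /= mulr0n mulr1n sub0r mulrN1 mulrN oppr_eq0 !mulf_eq0.
rewrite (negbTE uj_neq0) (negbTE (exponent_neq0 j)) expf_eq0 /= => /eqP x_eq0.
by have := xH j; rewrite (hfunE (o := Ordinal o_lt)) //= x_eq0 expr0n subr0.
Qed.

(* Coefficient c_t = (t+2) u_t of the quadratic q (zero when t >= d - k). *)
Definition kercoef (t : nat) : F := \sum_(j < d - k | j == t :> nat) u ord0 j * t.+2%:R.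

Lemma kercoef_psum t : kercoef t != 0 -> psum t.+2 = 0.
Proof.
move=> ct_neq0.
have [j /andP[/eqP <- uj_neq0]] : exists j : 'I_(d - k), (j == t :> nat) && (u ord0 j != 0).
  apply/existsP; apply: contraNT ct_neq0 => /existsPn u_eq0; rewrite /kercoef big1 // => j jt.
  by move: (u_eq0 j); rewrite jt negbK => /eqP ->; rewrite mul0r.
exact: kernel_psum.
Qed.

Hypothesis dk_le3 : (d - k <= 3)%N.

(* Head column i: x_i q(x_i) = 0, so nonzero head coordinates are roots of q
   (this uses d - k <= 3, i.e. deg q <= 2). *)
Lemma kercoef_root (i : 'I_d) : (i < k)%N -> x ord0 i != 0 ->
  kercoef 0%N + kercoef 1%N * x ord0 i + kercoef 2%N * x ord0 i ^+ 2 = 0.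
Proof.
move=> i_lt_k xi_neq0; have := kernel_column i.
have high_neq j : (i == (k + j)%N :> nat) = false.
  by apply: contraTF i_lt_k => /eqP ->; rewrite -leqNgt leq_addr.
under eq_bigr => j _ do rewrite jacHE i_lt_k high_neq subr0 mulr1.
have inner t : \sum_(j < d - k | j == t :> nat) u ord0 j * (t.+2%:R * x ord0 i ^+ t.+1) =
    kercoef t * x ord0 i ^+ t.+1.
  by rewrite /kercoef big_distrl; apply: eq_bigr => j _; rewrite mulrA.
rewrite (@sum_regroup _ _ 3 (fun j t => u ord0 j * (t.+2%:R * x ord0 i ^+ t.+1))) //.
rewrite !big_ord_recr big_ord0 !inner /= add0r.
have -> : forall c0 c1 c2 z : F, c0 * z ^+ 1 + c1 * z ^+ 2 + c2 * z ^+ 3 =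
    z * (c0 + c1 * z + c2 * z ^+ 2) by move=> *; ring.
by move/eqP; rewrite mulf_eq0 (negbTE xi_neq0) => /eqP.
Qed.

Lemma kercoef_neq0 : u != 0 -> exists2 t, (t < 3)%N & kercoef t != 0.
Proof.
move=> u_neq0; have [j uj_neq0] : exists j, u ord0 j != 0.
  apply/existsP; apply: contraNT u_neq0 => /existsPn u_eq0; apply/eqP/rowP => j.
  by rewrite mxE; move: (u_eq0 j); rewrite negbK => /eqP.
exists j; first exact: leq_trans (ltn_ord j) dk_le3.
by rewrite /kercoef (big_pred1 j) // mulf_neq0 ?exponent_neq0.
Qed.

End RegularPoints.

Lemma jacH_full_rank (F : fieldType) (p d k : nat) (x : 'rV[F]_d) :
  p \in [pchar F] -> (d < p)%N -> (0 < k)%N -> (d - k <= 3)%N ->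
  inH k x -> x != 0 -> \rank (jacH k x) = (d - k)%N.
Proof.
move=> pcharFp d_lt_p k_gt0 dk_le3 xH x_neq0.
apply/eqP; rewrite eqn_leq rank_leq_row leqNgt; apply/rank_ltP => -[u u_neq0 uJ].
have [i i_lt_k xi_neq0] : exists2 i : 'I_d, (i < k)%N & x ord0 i != 0.
  apply/exists_inP; apply: contraNT x_neq0 => /exists_inPn x_low.
  by apply/eqP/(inH_eq0 xH) => i /x_low /negPn /eqP.
apply: (@no_quadratic_relation F p 'I_d (fun i : 'I_d => (i < k)%N) (x ord0)
  pcharFp _ (kercoef u)).
- by rewrite card_ord.
- by exists i.
- by move=> j j_lt_k; apply: kercoef_root.
- by move=> t _; apply: (kercoef_psum pcharFp d_lt_p k_gt0 xH uJ).
- exact: (kercoef_neq0 pcharFp d_lt_p k_gt0 dk_le3 u_neq0).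
Qed.

Theorem proposition3 (d : nat) (hd : (3 <= d)%N) :
  exists C : nat, forall p : nat, prime p -> (C < p)%N ->
  forall F : closedFieldType, is_alg_closure_Fp p F ->
  forall k : nat, (2 <= k)%N -> (k <= d - 1)%N ->
    ((4 <= d - k)%N ->
       exists x : 'rV[F]_d, [/\ inH k x, x != 0 & (\rank (jacH k x) < d - k)%N])
    /\
    ((d - k <= 3)%N ->
       forall x : 'rV[F]_d, inH k x -> x != 0 -> \rank (jacH k x) = (d - k)%N).
Proof.
exists d => p _ d_lt_p F [pcharFp _] k k_ge2 k_lt_d; split => [dk_ge4 | dk_le3].
- have [r r_root] := @closed_roots F (fun j => j.+2) (fun j => 1 + (-1) ^+ j.+2) (fun j => isT).
  exists (witness d k r); split.
  + by apply: witness_inH => //; lia.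
  + by apply: witness_neq0; lia.
  + by apply: witness_singular => //; apply: natr_neq0_lt_pchar pcharFp _ _ => //; lia.
- by move=> x xH x_neq0; apply: jacH_full_rank pcharFp d_lt_p _ dk_le3 xH x_neq0; lia.
Qed.
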